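(* Let $d,d'\in\mathcal D$ with quantities $(\mathbf P,\mathbf r,\boldsymbol\pi,J_\mu,\mathbf g)$ for $d$ and $(\mathbf P',\mathbf r')$ for $d'$. The function $\delta\mapsto J^\delta_{\mu,\sigma}$ (combined metric of the mixed policy $d^{\delta,d'}$) is differentiable at $\delta=0$ (from the right), with $$\frac{\mathrm d J^\delta_{\mu,\sigma}}{\mathrm d\delta}\Big|_{\delta=0}=\boldsymbol\pi\Big[(\mathbf P'-\mathbf P)\mathbf g+\mathbf r'-\beta(\mathbf r'-J_\mu\mathbf 1)^2_\odot-\mathbf r+\beta(\mathbf r-J_\mu\mathbf 1)^2_\odot\Big].$$
   Context: Let $\mathcal S=\{1,\dots,S\}$ be a finite state space and $\mathcal A$ a finite action set, with transition probabilities $p^a(i,j)$ ($\sum_j p^a(i,j)=1$) and rewards $r(i,a)\in\mathbb R$. A deterministic stationary policy is a map $d:\mathcal S\to\mathcal A$; $\mathcal D$ is the set of these; $\mathbf P^d$ has entries $p^{d(i)}(i,j)$ and $\mathbf r^d$ has entries $r(i,d(i))$. Standing assumption: every $\mathbf P^d$, $d\in\mathcal D$, is irreducible. For $d$: $\boldsymbol\pi^d$ is the unique stationary distribution (row vector, all entries positive), $J^d_\mu=\boldsymbol\pi^d\mathbf r^d$, and for fixed $\beta>0$, $J^d_{\mu,\sigma}=\boldsymbol\pi^d\mathbf f^d$ with $f^d(i)=r(i,d(i))-\beta(r(i,d(i))-J^d_\mu)^2$; $\mathbf g^d$ is any solution of $\mathbf g^d=\mathbf f^d-J^d_{\mu,\sigma}\mathbf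 1+\mathbf P^d\mathbf g^d$. Mixed policy: for $d,d'\in\mathcal D$ and $\delta\in[0,1]$, $d^{\delta,d'}$ is the randomized stationary policy which at each visit to state $i$ independently takes action $d(i)$ with probability $1-\delta$ and $d'(i)$ with probability $\delta$. Its transition matrix is $\mathbf P^\delta=\mathbf P+\delta(\mathbf P'-\mathbf P)$ (irreducible, with unique positive stationary distribution $\boldsymbol\pi^\delta$), its mean is $J^\delta_\mu=\boldsymbol\pi^\delta[\mathbf r+\delta(\mathbf r'-\mathbf r)]$, and its combined metric is $J^\delta_{\mu,\sigma}=\boldsymbol\pi^\delta\mathbf f^\delta$ with $f^\delta(i)=(1-\delta)[r(i)-\beta(r(i)-J^\delta_\mu)^2]+\delta[r'(i)-\beta(r'(i)-J^\delta_\mu)^2]$. For a vector $\mathbf v$, $(\mathbf v)^2_\odot$ is its componentwise square. *)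

From HB Require Import structures.
From mathcomp Require Import all_boot all_order all_algebra.
From mathcomp Require Import all_classical all_reals all_analysis.
Set Implicit Arguments. Unset Strict Implicit. Unset Printing Implicit Defensive.
Import Order.TTheory GRing.Theory Num.Theory.
Local Open Scope ring_scope.

Section MDP.
Variables (R : realType) (n : nat) (A : finType).
(* States are 'I_n.+1 (S = n+1 >= 1 states); p a is the transition matrix of
   action a, r i a the reward. *)

Definition stochastic (P : 'M[R]_n.+1) : Prop :=
  (forall i j, 0 <= P i j) /\ (forall i, \sum_j P i j = 1).

Definition irreducible (P : 'M[R]_n.+1) : Prop :=
  forall i j, exists k : nat, 0 < (P ^+ k) i j.

Definition stationary (P : 'M[R]_n.+1) (pi : 'rV[R]_n.+1) : Prop :=
  pi *m P = pi /\ (forall j, 0 <= pi 0 j) /\ \sum_j pi 0 j = 1.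

(* "the" stationary distribution (unique when P is irreducible) *)
Definition stat_dist (P : 'M[R]_n.+1) : 'rV[R]_n.+1 :=
  xget 0 [set pi | stationary P pi].

Definition Pmat (p : A -> 'M[R]_n.+1) (d : 'I_n.+1 -> A) : 'M[R]_n.+1 :=
  \matrix_(i, j) p (d i) i j.

Definition rvec (r : 'I_n.+1 -> A -> R) (d : 'I_n.+1 -> A) : 'cV[R]_n.+1 :=
  \col_i r i (d i).

Definition Jmu p r d : R := (stat_dist (Pmat p d) *m rvec r d) 0 0.

Definition fvec (beta : R) p r d : 'cV[R]_n.+1 :=
  \col_i (r i (d i) - beta * (r i (d i) - Jmu p r d) ^+ 2).

Definition Jmusig (beta : R) p r d : R :=
  (stat_dist (Pmat p d) *m fvec beta p r d) 0 0.

Definition Pmix p d d' (delta : R) : 'M[R]_n.+1 :=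
  Pmat p d + delta *: (Pmat p d' - Pmat p d).

Definition rmix r d d' (delta : R) : 'cV[R]_n.+1 :=
  rvec r d + delta *: (rvec r d' - rvec r d).

Definition Jmu_mix p r d d' (delta : R) : R :=
  (stat_dist (Pmix p d d' delta) *m rmix r d d' delta) 0 0.

Definition fmix (beta : R) p r d d' (delta : R) : 'cV[R]_n.+1 :=
  let J := Jmu_mix p r d d' delta in
  \col_i ((1 - delta) * (r i (d i) - beta * (r i (d i) - J) ^+ 2)
          + delta * (r i (d' i) - beta * (r i (d' i) - J) ^+ 2)).

Definition Jmusig_mix (beta : R) p r d d' (delta : R) : R :=
  (stat_dist (Pmix p d d' delta) *m fmix beta p r d d' delta) 0 0.

End MDP.

From HB Require Import structures.
From mathcomp Require Import all_boot all_order all_algebra.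
From mathcomp Require Import all_classical all_reals all_analysis.
From mathcomp Require Import ring lra.
Import Order.TTheory GRing.Theory Num.Theory numFieldNormedType.Exports.
Local Open Scope ring_scope.
Local Open Scope classical_set_scope.

(* Write P' = P + D for the transition matrices of d' and d, pi_h for the
   stationary distribution of P_h = P + h D, J_h for the mean and f_h for the
   combined reward vector of the mixed policy.  The proof has three parts.
   1. Markov chain facts: a stochastic matrix has a stationary distribution;
      for irreducible P the fundamental matrix Z = I - P + 1 pi is invertible
      (harmonic vectors are constant), and comparing the stationarity equations
      of pi and pi_h gives  pi_h - pi = h pi_h D Z^-1, so pi_h --> pi.
   2. The Poisson equation g = f - J_{mu,sigma} 1 + P g gives the exact identity
      (pi_h - pi) f = h pi_h D g, and the mean satisfies J_h - J = h K_h with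
      K_h = pi_h (D Z^-1 r + r' - r) converging.
   3. Expanding f_h - f and dividing by h, the difference quotient equals
      pi_h (D g + gap(J_h)) + beta K_h pi_h (2 r - J - J_h); the first term tends
      to the claimed derivative and the second to beta K_0 pi (2 r - 2 J) = 0. *)

Section RightLimits.
Variable R : realType.
Set Implicit Arguments. Unset Strict Implicit.

Lemma cvg_near_eqr (f g : R -> R) (l : R) :
  (\forall h \near 0^'+, f h = g h) -> g @ 0^'+ --> l -> f @ 0^'+ --> l.
Proof.
move=> fg gl; apply: cvg_trans gl; apply: near_eq_cvg.
by near=> h; rewrite (near fg h).
Unshelve. all: by end_near.
Qed.

Lemma near0_unit_interval : \forall h \near (0 : R)^'+, 0 <= h <= 1.
Proof.
near=> h.
have h0 : 0 < h by near: h; exact: nbhs_right_gt.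
have h1 : h < 1 by near: h; apply: nbhs_right_lt; exact: ltr01.
by rewrite !ltW.
Unshelve. all: by end_near.
Qed.

Lemma cvg_idr : (fun h : R => h) @ 0^'+ --> 0.
Proof. exact: cvg_at_right_filter cvg_id. Qed.

Lemma cvg_vanish (e : R -> R) (C : R) :
  (\forall h \near 0^'+, `|e h| <= C) -> (fun h => h * e h) @ 0^'+ --> 0.
Proof.
move=> eC.
have C0 : (fun h : R => h * C) @ 0^'+ --> 0.
  by rewrite -[X in _ --> X](mul0r C); exact: (cvgM cvg_idr (cvg_cst C)).
have NC0 : (fun h : R => - (h * C)) @ 0^'+ --> 0.
  by rewrite -[X in _ --> X]oppr0; exact: (cvgN C0).
apply: (squeeze_cvgr _ NC0 C0); near=> h.
have hp : 0 < h by near: h; exact: nbhs_right_gt.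
have hC : `|e h| <= C by near: h; exact: eC.
by rewrite -mulrN !ler_pM2l // -ler_norml.
Unshelve. all: by end_near.
Qed.

Lemma cvg_dot (I : finType) (x y : I -> R -> R) (x0 y0 : I -> R) :
  (forall i, x i @ 0^'+ --> x0 i) -> (forall i, y i @ 0^'+ --> y0 i) ->
  (fun h => \sum_i x i h * y i h) @ 0^'+ --> \sum_i x0 i * y0 i.
Proof.
move=> xl yl; apply: cvg_big => [|i _]; first exact: add_continuous.
exact: cvgM.
Qed.

End RightLimits.

Section StochasticMatrices.
Variables (R : realType) (n : nat).
Set Implicit Arguments. Unset Strict Implicit.
Implicit Types (P Q D : 'M[R]_n.+1) (pi : 'rV[R]_n.+1) (z : 'cV[R]_n.+1).

Local Notation one := (const_mx 1 : 'cV[R]_n.+1).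

Lemma stochastic_mul P Q : stochastic P -> stochastic Q -> stochastic (P *m Q).
Proof.
move=> [P0 P1] [Q0 Q1]; split=> [i j|i].
  by rewrite mxE; apply: sumr_ge0 => l _; apply: mulr_ge0.
under eq_bigr do rewrite mxE.
rewrite exchange_big /=.
under eq_bigr do rewrite -mulr_sumr Q1 mulr1.
exact: P1.
Qed.

Lemma stochastic_pow k P : stochastic P -> stochastic (P ^+ k).
Proof.
move=> sP; elim: k => [|k IH].
  rewrite expr0; split=> [i j|i]; first by rewrite mxE ler0n.
  rewrite (bigD1 i) //= big1 => [|j /negbTE nji]; first by rewrite mxE eqxx addr0.
  by rewrite mxE eq_sym nji.
by rewrite exprS -mulmxE; apply: stochastic_mul.
Qed.

Lemma stochastic_convex P Q (h : R) : stochastic P -> stochastic Q ->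
  0 <= h <= 1 -> stochastic (P + h *: (Q - P)).
Proof.
move=> [P0 P1] [Q0 Q1] /andP [h0 h1]; split=> [i j|i].
  have -> : (P + h *: (Q - P)) i j = (1 - h) * P i j + h * Q i j.
    by rewrite !mxE; ring.
  by rewrite addr_ge0 // mulr_ge0 // subr_ge0.
under eq_bigr do rewrite !mxE.
by rewrite big_split /= -mulr_sumr sumrB P1 Q1 subrr mulr0 addr0.
Qed.

Lemma stochastic_mul_one P : stochastic P -> P *m one = one.
Proof.
move=> [_ P1]; apply/matrixP=> i j; rewrite !mxE.
under eq_bigr do rewrite mxE mulr1.
exact: P1.
Qed.

(* Maximum principle: a P-harmonic vector of an irreducible stochastic matrix
   is constant, since at a maximizing state every reachable state attains the
   maximum. *)
Lemma harmonic_const P z : stochastic P -> irreducible P ->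
  P *m z = z -> forall i j, z i 0 = z j 0.
Proof.
move=> sP iP Pz.
have Pkz k : (P ^+ k) *m z = z.
  elim: k => [|k IH]; first by rewrite expr0 mul1mx.
  by rewrite exprS -mulmxE -mulmxA IH Pz.
case: (arg_maxP (fun i => z i 0) (isT : predT ord0)) => i0 _ zmax.
suff all_eq j : z j 0 = z i0 0 by move=> i j; rewrite !all_eq.
have [k Pk_pos] := iP i0 j.
have [Q0 Q1] := stochastic_pow k sP.
have dev0 : \sum_l (P ^+ k) i0 l * (z i0 0 - z l 0) = 0.
  under eq_bigr do rewrite mulrBr.
  rewrite sumrB -mulr_suml Q1 mul1r.
  have := congr1 (fun M : 'cV[R]_n.+1 => M i0 0) (Pkz k); rewrite mxE => ->.
  by rewrite subrr.
have dev_ge0 l : true -> 0 <= (P ^+ k) i0 l * (z i0 0 - z l 0).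
  by move=> _; rewrite mulr_ge0 // subr_ge0; exact: zmax.
move: (psumr_eq0P dev_ge0 dev0 (i := j) isT) => /eqP.
by rewrite mulf_eq0 (gt_eqF Pk_pos) /= subr_eq0 => /eqP ->.
Qed.

(* Existence of a stationary distribution: I - P is singular, and the
   entrywise modulus of a left null vector is P-superinvariant with the same
   total mass, hence invariant; normalizing it gives a distribution. *)
Lemma stationary_exists P : stochastic P -> exists pi, stationary P pi.
Proof.
move=> sP; have [P0 P1] := sP.
have : \det (1%:M - P) == 0.
  rewrite -det_tr; apply/det0P; exists one^T.
    by apply/eqP => /matrixP /(_ 0 0); rewrite !mxE => /eqP; rewrite oner_eq0.
  by rewrite -trmx_mul mulmxBl mul1mx stochastic_mul_one // subrr trmx0.
move=> /det0P [v vn0 hv].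
have vP : v *m P = v.
  by apply/eqP; rewrite eq_sym -subr_eq0 -{1}(mulmx1 v) -mulmxBr hv.
pose w := \row_j `|v 0 j|.
have w_super j : w 0 j <= (w *m P) 0 j.
  rewrite !mxE -{1}vP mxE (le_trans (ler_norm_sum _ _ _)) //.
  by apply: ler_sum => i _; rewrite mxE normrM (ger0_norm (P0 i j)).
have mass0 : \sum_j ((w *m P) 0 j - w 0 j) = 0.
  rewrite sumrB; under eq_bigr do rewrite mxE.
  rewrite exchange_big /=.
  under eq_bigr do rewrite -mulr_sumr P1 mulr1.
  by rewrite subrr.
have wP : w *m P = w.
  apply/matrixP => i j; rewrite ord1; apply/eqP; rewrite -subr_eq0; apply/eqP.
  have hge j' : true -> 0 <= (w *m P) 0 j' - w 0 j' by move=> _; rewrite subr_ge0.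
  exact: (psumr_eq0P hge mass0).
have w_ge0 j : true -> 0 <= w 0 j by move=> _; rewrite mxE.
have mass_gt0 : 0 < \sum_j w 0 j.
  rewrite lt_def sumr_ge0 // andbT; apply/eqP => s0; move/eqP: vn0; apply.
  apply/matrixP => i j; rewrite ord1 mxE.
  by move/eqP: (psumr_eq0P w_ge0 s0 (i := j) isT); rewrite mxE normr_eq0 => /eqP.
exists ((\sum_j w 0 j)^-1 *: w); split; [|split].
- by rewrite -scalemxAl wP.
- move=> j; rewrite mxE; apply: mulr_ge0; [by rewrite invr_ge0 ltW | exact: w_ge0].
- under eq_bigr do rewrite mxE.
  by rewrite -mulr_sumr mulVf // gt_eqF.
Qed.

Lemma stat_distP P : stochastic P -> stationary P (stat_dist P).
Proof. by move=> sP; apply: (xgetPex 0 (stationary_exists sP)). Qed.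

Lemma stationary_mul_one P pi : stationary P pi -> pi *m one = 1%:M.
Proof.
move=> [_ [_ pi1]]; apply/matrixP => i j; rewrite !ord1 !mxE /=.
by under eq_bigr do rewrite mxE mulr1.
Qed.

Lemma stationary_entry_norm P pi j : stationary P pi -> `|pi 0 j| <= 1.
Proof.
move=> [_ [pi0 pi1]]; rewrite ger0_norm // -pi1 (bigD1 j) //= lerDl.
by apply: sumr_ge0 => i _.
Qed.

Definition fundamental P pi : 'M[R]_n.+1 := 1%:M - P + one *m pi.

(* Z is invertible: a vector z with Z z = 0 satisfies pi z = 0 and P z = z,
   so it is constant, and then pi z = 0 forces z = 0. *)
Lemma fundamental_unit P pi : stochastic P -> irreducible P -> stationary P pi ->
  fundamental P pi \in unitmx.
Proof.
move=> sP iP spi; have [piP [_ pi1]] := spi.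
rewrite unitmxE unitfE; apply/negP => /eqP det0.
have : \det (fundamental P pi)^T == 0 by rewrite det_tr det0.
move=> /det0P [v vn0 hv].
pose z := v^T.
have Zz : fundamental P pi *m z = 0.
  by rewrite /z -[fundamental P pi]trmxK -trmx_mul hv trmx0.
have piz : pi *m z = 0.
  have := congr1 (mulmx pi) Zz.
  rewrite mulmx0 mulmxA /fundamental mulmxDr mulmxBr mulmx1 piP subrr add0r.
  by rewrite mulmxA (stationary_mul_one spi) mul1mx.
have Pz : P *m z = z.
  move: Zz; rewrite /fundamental !mulmxDl mulNmx mul1mx -mulmxA piz mulmx0 addr0.
  by move/eqP; rewrite subr_eq0 => /eqP.
have zc := harmonic_const sP iP Pz.
have z0 : z = 0.
  apply/matrixP => i j; rewrite ord1 [RHS]mxE (zc i 0).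
  have := congr1 (fun M : 'M[R]_1 => M 0 0) piz; rewrite !mxE.
  under eq_bigr do rewrite (zc _ 0).
  by rewrite -mulr_suml pi1 mul1r /z mxE.
by move/eqP: vn0; apply; rewrite -[v]trmxK -/z z0 trmx0.
Qed.

Lemma stationary_mass P P' pi pi' : stationary P pi -> stationary P' pi' ->
  (pi' - pi) *m one = 0.
Proof.
by move=> spi spi'; rewrite mulmxBl (stationary_mul_one spi) (stationary_mul_one spi') subrr.
Qed.

Lemma stationary_flow P D pi pi' (h : R) :
  stationary P pi -> stationary (P + h *: D) pi' ->
  (pi' - pi) *m (1%:M - P) = h *: (pi' *m D).
Proof.
move=> [piP _] [pi'P _].
have pi'P_eq : pi' *m P = pi' - h *: (pi' *m D).
  by rewrite -{2}pi'P mulmxDr -scalemxAr addrK.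
rewrite mulmxBr mulmx1 mulmxBl pi'P_eq piP.
by rewrite [pi' - _ - pi]addrAC opprB addrCA subrr addr0.
Qed.

Lemma stationary_perturb P D pi pi' (h : R) :
  stationary P pi -> stationary (P + h *: D) pi' ->
  (pi' - pi) *m fundamental P pi = h *: (pi' *m D).
Proof.
move=> spi spi'.
by rewrite mulmxDr (stationary_flow spi spi') mulmxA (stationary_mass spi spi') mul0mx addr0.
Qed.

Lemma stat_dist_expansion P D (h : R) :
  stochastic P -> irreducible P -> stochastic (P + h *: D) ->
  stat_dist (P + h *: D) =
    stat_dist P + h *: (stat_dist (P + h *: D) *m D
                        *m invmx (fundamental P (stat_dist P))).
Proof.
move=> sP iP sPh; have spi := stat_distP sP.
have := stationary_perturb spi (stat_distP sPh).
move=> /(congr1 (mulmx^~ (invmx (fundamental P (stat_dist P))))).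
rewrite mulmxK ?fundamental_unit // -scalemxAl => <-.
by rewrite [RHS]addrC subrK.
Qed.

(* Continuity of the stationary distribution along a perturbation from the
   right: pi_h - pi is h times a bounded quantity. *)
Lemma stat_dist_cvg P D : stochastic P -> irreducible P ->
  (\forall h \near 0^'+, stochastic (P + h *: D)) ->
  forall j, (fun h => stat_dist (P + h *: D) 0 j) @ 0^'+ --> stat_dist P 0 j.
Proof.
move=> sP iP sPh j.
pose N := D *m invmx (fundamental P (stat_dist P)).
apply: (@cvg_near_eqr _ _
  (fun h => stat_dist P 0 j + h * (stat_dist (P + h *: D) *m N) 0 j)).
  near=> h; rewrite {1}stat_dist_expansion //; last by near: h.
  by rewrite /N -mulmxA !mxE.
rewrite -[X in _ --> X]addr0; apply: cvgD; first exact: cvg_cst.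
apply: (@cvg_vanish _ _ (\sum_i `|N i j|)); near=> h.
have sPh_h : stochastic (P + h *: D) by near: h.
have spih := stat_distP sPh_h.
rewrite mxE (le_trans (ler_norm_sum _ _ _)) //; apply: ler_sum => i _.
by rewrite normrM ler_piMl // (stationary_entry_norm i spih).
Unshelve. all: by end_near.
Qed.

(* Poisson equation: if g = f - c 1 + P g, i.e. f = (I - P) g + c 1, then
   moving from pi to the stationary distribution pi' of P + h D changes the
   mean of f by h pi' D g. *)
Lemma stationary_poisson P D pi pi' (h c : R) (f g : 'cV[R]_n.+1) :
  stationary P pi -> stationary (P + h *: D) pi' ->
  g = f - c *: one + P *m g ->
  (pi' - pi) *m f = h *: (pi' *m D *m g).
Proof.
move=> spi spi' gE.
have -> : f = (1%:M - P) *m g + c *: one.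
  by rewrite mulmxBl mul1mx {1}gE addrK subrK.
rewrite mulmxDr mulmxA (stationary_flow spi spi') -scalemxAr.
by rewrite (stationary_mass spi spi') scaler0 addr0 !scalemxAl.
Qed.

End StochasticMatrices.

Section MixedPolicy.
Variables (R : realType) (n : nat) (A : finType).
Variables (p : A -> 'M[R]_n.+1) (r : 'I_n.+1 -> A -> R) (beta : R).
Variables (d d' : 'I_n.+1 -> A).
Hypothesis hp : forall a, stochastic (p a).
Set Implicit Arguments. Unset Strict Implicit.

Local Notation P := (Pmat p d).
Local Notation D := (Pmat p d' - Pmat p d).
Local Notation pi := (stat_dist (Pmat p d)).
Local Notation pih h := (stat_dist (Pmix p d d' h)).
Local Notation J := (Jmu p r d).
Local Notation Jh h := (Jmu_mix p r d d' h).
Local Notation f := (fvec beta p r d).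
Local Notation fh h := (fmix beta p r d d' h).

Lemma Pmat_stochastic e : stochastic (Pmat p e).
Proof.
split=> [i j|i]; first by rewrite mxE; have [] := hp (e i).
under eq_bigr do rewrite mxE.
by have [_ ->] := hp (e i).
Qed.

Lemma Pmix_stochastic_near : \forall h \near 0^'+, stochastic (Pmix p d d' h).
Proof.
apply: filterS (near0_unit_interval R) => h.
exact: stochastic_convex (Pmat_stochastic d) (Pmat_stochastic d').
Qed.

Lemma Jmu_mix0 : Jh 0 = J.
Proof. by rewrite /Jmu_mix /Pmix /rmix !scale0r !addr0. Qed.

Lemma Jmusig_mix0 : Jmusig_mix beta p r d d' 0 = Jmusig beta p r d.
Proof.
rewrite /Jmusig_mix /Jmusig /Pmix scale0r addr0; congr ((_ *m _) 0 0).
by apply/matrixP => i j; rewrite !mxE Jmu_mix0; ring.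
Qed.

Definition reward_gap (x : R) : 'cV[R]_n.+1 :=
  \col_i (r i (d' i) - beta * (r i (d' i) - x) ^+ 2
          - r i (d i) + beta * (r i (d i) - x) ^+ 2).

Lemma reward_gap_cvg (x : R -> R) (x0 : R) i : x @ 0^'+ --> x0 ->
  (fun h => reward_gap (x h) i 0) @ 0^'+ --> reward_gap x0 i 0.
Proof.
move=> xl; rewrite mxE; under eq_fun do rewrite mxE.
by apply: cvgD; [apply: cvgB; [apply: cvgB|]|];
  rewrite ?expr2; repeat apply: cvgM; repeat apply: cvgB;
  (exact: cvg_cst || exact: xl).
Qed.

Lemma fmix_sub h i : fh h i 0 - f i 0 =
  h * reward_gap (Jh h) i 0 + beta * (Jh h - J) * (2 * r i (d i) - J - Jh h).
Proof. by rewrite !mxE; ring. Qed.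

Lemma stat_centered_reward : stochastic P ->
  \sum_i pi 0 i * (2 * r i (d i) - J - J) = 0.
Proof.
move=> sP; have [_ [_ pi1]] := stat_distP sP.
have JE : J = \sum_i pi 0 i * r i (d i).
  by rewrite /Jmu mxE; apply: eq_bigr => i _; rewrite mxE.
under eq_bigr do rewrite mulrBr mulrBr mulrA [pi 0 _ * 2]mulrC -mulrA.
by rewrite !sumrB -!mulr_suml -mulr_sumr -JE pi1 mul1r; ring.
Qed.

Hypothesis hirr : irreducible P.

Lemma pih_cvg j : (fun h => pih h 0 j) @ 0^'+ --> pi 0 j.
Proof. exact: stat_dist_cvg (Pmat_stochastic d) hirr Pmix_stochastic_near j. Qed.

Definition mean_dir : 'cV[R]_n.+1 :=
  D *m invmx (fundamental P pi) *m rvec r d + (rvec r d' - rvec r d).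

Definition mean_rate (h : R) : R := (pih h *m mean_dir) 0 0.

Lemma Jmu_mix_expansion : \forall h \near 0^'+, Jh h = J + h * mean_rate h.
Proof.
apply: filterS Pmix_stochastic_near => h sPh.
have piE := stat_dist_expansion (Pmat_stochastic d) hirr sPh.
have e : pih h *m (rvec r d + h *: (rvec r d' - rvec r d))
         = pi *m rvec r d + h *: (pih h *m mean_dir).
  rewrite mulmxDr {1}piE mulmxDl -addrA; congr (_ + _).
  by rewrite -scalemxAl -scalemxAr -scalerDr /mean_dir mulmxDr !mulmxA.
by rewrite /Jmu_mix /rmix e mxE [X in _ + X]mxE.
Qed.

Lemma mean_rate_cvg : mean_rate @ 0^'+ --> (pi *m mean_dir) 0 0.
Proof.
rewrite /mean_rate mxE; under eq_fun do rewrite mxE.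
by apply: cvg_dot => i; [exact: pih_cvg | exact: cvg_cst].
Qed.

Lemma Jmu_mix_cvg : (fun h => Jh h) @ 0^'+ --> J.
Proof.
apply: cvg_near_eqr Jmu_mix_expansion _.
rewrite -[X in _ --> X]addr0; apply: cvgD; first exact: cvg_cst.
rewrite -[X in _ --> X](mul0r ((pi *m mean_dir) 0 0)).
by apply: cvgM; [exact: cvg_idr | exact: mean_rate_cvg].
Qed.

Variable g : 'cV[R]_n.+1.
Hypothesis hg : g = f - Jmusig beta p r d *: const_mx 1 + P *m g.

Lemma Jmusig_mix_quotient : \forall h \near 0^'+,
  h^-1 * (Jmusig_mix beta p r d d' h - Jmusig_mix beta p r d d' 0) =
  \sum_i pih h 0 i * ((D *m g) i 0 + reward_gap (Jh h) i 0)
  + beta * mean_rate h * \sum_i pih h 0 i * (2 * r i (d i) - J - Jh h).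
Proof.
near=> h.
have sPh : stochastic (Pmix p d d' h) by near: h; exact: Pmix_stochastic_near.
have h_neq0 : h != 0 by rewrite gt_eqF //; near: h; exact: nbhs_right_gt.
have dJ : Jh h - J = h * mean_rate h.
  by apply/eqP; rewrite subr_eq addrC; apply/eqP; near: h; exact: Jmu_mix_expansion.
have poisson : (pih h *m f) 0 0 - (pi *m f) 0 0 = h * (pih h *m (D *m g)) 0 0.
  have e := stationary_poisson (stat_distP (Pmat_stochastic d)) (stat_distP sPh) hg.
  have := congr1 (fun M : 'M[R]_1 => M 0 0) e.
  rewrite mulmxBl -mulmxA [X in _ = X -> _]mxE => <-.
  by rewrite [RHS]mxE [X in _ = _ + X]mxE.
have split_f : (pih h *m fh h) 0 0 - (pi *m f) 0 0 =
    ((pih h *m f) 0 0 - (pi *m f) 0 0) + \sum_i pih h 0 i * (fh h i 0 - f i 0).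
  rewrite addrAC; congr (_ - _); rewrite !mxE -big_split /=.
  by apply: eq_bigr => i _; ring.
rewrite Jmusig_mix0 /Jmusig_mix /Jmusig split_f poisson mxE.
apply: (mulfI h_neq0); rewrite mulVKf //.
rewrite !mulr_sumr -!big_split /= mulr_sumr; apply: eq_bigr => i _.
by rewrite fmix_sub dJ; ring.
Unshelve. all: by end_near.
Qed.

End MixedPolicy.

(* The main result: pass to the limit in the difference quotient; the term
   carrying the shift of the mean vanishes because pi centers the reward. *)
Theorem lemma2 (R : realType) (n : nat) (A : finType)
  (p : A -> 'M[R]_n.+1) (r : 'I_n.+1 -> A -> R) (beta : R)
  (hp : forall a, stochastic (p a))
  (hirr : forall d : 'I_n.+1 -> A, irreducible (Pmat p d))
  (hbeta : 0 < beta)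
  (d d' : 'I_n.+1 -> A) (g : 'cV[R]_n.+1)
  (hg : g = fvec beta p r d - (Jmusig beta p r d) *: const_mx 1
            + Pmat p d *m g) :
  let pi := stat_dist (Pmat p d) in
  let J := Jmu p r d in
  (fun h : R => h^-1 * (Jmusig_mix beta p r d d' h - Jmusig_mix beta p r d d' 0))
    @ 0^'+ -->
  (pi *m ((Pmat p d' - Pmat p d) *m g
          + \col_i (r i (d' i) - beta * (r i (d' i) - J) ^+ 2
                    - r i (d i) + beta * (r i (d i) - J) ^+ 2))) 0 0.
Proof.
move=> pi J; rewrite {}/pi {}/J.
have sP := Pmat_stochastic hp d.
have pil := pih_cvg d' hp (hirr d).
apply: cvg_near_eqr (Jmusig_mix_quotient d' hp (hirr d) hg) _.
rewrite [X in _ --> X](_ : _ =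
    \sum_i stat_dist (Pmat p d) 0 i *
      (((Pmat p d' - Pmat p d) *m g) i 0 + reward_gap r beta d d' (Jmu p r d) i 0)
    + beta * (stat_dist (Pmat p d) *m mean_dir p r d d') 0 0
      * \sum_i stat_dist (Pmat p d) 0 i * (2 * r i (d i) - Jmu p r d - Jmu p r d)); last first.
  rewrite stat_centered_reward // mulr0 addr0 mxE.
  by apply: eq_bigr => i _; rewrite mxE.
apply: cvgD.
  apply: cvg_dot => i; first exact: pil.
  apply: cvgD; first exact: cvg_cst.
  exact: reward_gap_cvg (Jmu_mix_cvg d' hp (hirr d)).
apply: cvgM; first by apply: cvgM; [exact: cvg_cst | exact: (mean_rate_cvg hp (hirr d))].
apply: cvg_dot => i; first exact: pil.
by apply: cvgB; [apply: cvgB; exact: cvg_cst | exact: (Jmu_mix_cvg d' hp (hirr d))].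
Qed.
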